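(* Let $n,m$ be positive integers and $\mathbf{r}=(r_1,\dots,r_m)$, $\mathbf{s}=(s_1,\dots,s_m)$ sequences of nonnegative integers with sums $r$ and $s$. Then \[ |\mathrm{SB}(n,\mathbf{r},\mathbf{s})| = |\mathrm{SB}^-(n,\mathbf{r},\mathbf{s})| \frac{\left((r+s+1)n+m\binom n2+\sum_{i=1}^m r_is_i\right)!} {\left((r+s+1)n+m\binom n2\right)!}. \]
   Context: For nonnegative integers $p,q$, the $(n,p,q)$-staircase is the set of cells $(i,j)$ (row $i$, column $j$) with $1\le i\le p+n$, $1\le j\le n+q$, $i\le j+p$; the cell $(j+p,j)$ ($1\le j\le n$) is its $j$th diagonal cell (row $i>p$ contains the diagonal cell $(i,i-p)$, column $j\le n$ contains $(j+p,j)$, other rows/columns contain none). The $(n,p,q)^-$-staircase is obtained by removing the cells with $i\le p$ and $j>n$. Take pages $\lambda^{(i)}$ = the $(n,r_i,s_i)$-staircase (resp. $(n,r_i,s_i)^-$-staircase), $1\le i\le m$, identifying the $j$th diagonal cells of all pages for each $j$. An $(n,\mathbf{r},\mathbf{s})$-Selberg book (resp. $(n,\mathbf{r},\mathbf{s})^-$-Selberg book) is a filling of the resulting cells with $1,\dots,N$ where $N=(r+s+1)n+m\binom n2+\sum_i r_is_i$ (resp. $N=(r+s+1)n+m\binom n2$), each used once, such that in each page every non-diagonal cell has entry larger than that of the diagonal cell in its row (if any) and smaller than that of the diagonal cell in its column (if any). $\mathrm{SB}(n,\mathbf{r},\mathbf{s})$ and $\mathrm{SB}^-(n,\mathbf{r},\mathbf{s})$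 denote these sets. *)

From mathcomp Require Import all_boot all_order all_algebra.
Set Implicit Arguments. Unset Strict Implicit. Unset Printing Implicit Defensive.

(* Parameters: n, m, and r s : 'I_m -> nat (page i is indexed by i : 'I_m,
   i.e. page i.+1 of the paper). *)

Definition rsum m (r : 'I_m -> nat) : nat := \sum_(i < m) r i.

(* Ambient finite type containing all cells:
   - inl j (j : 'I_n) is the (j+1)-th diagonal cell (shared by all pages);
   - inr (i, a, b) is the cell in row a, column b (1-indexed) of page i. *)
Definition ambient n m (r s : 'I_m -> nat) : finType :=
  ('I_n + ('I_m * 'I_(rsum r + n).+1 * 'I_(n + rsum s).+1))%type.

(* Non-diagonal cells of page i
   are the cells (a,b) of the (n,r_i,s_i)-staircase with a <> b + r_i
   (the cells with a = b + r_i are exactly the diagonal cells). *)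
Definition is_cell n m (r s : 'I_m -> nat) (minus : bool)
    (x : ambient n r s) : bool :=
  match x with
  | inl _ => true
  | inr (i, a, b) =>
      [&& 1 <= a, 1 <= (b : nat), a <= r i + n, b <= n + s i, a <= b + r i,
          a != b + r i :> nat &
          (minus ==> ~~ ((a <= r i) && (n < b)))]
  end.

Definition cell n m (r s : 'I_m -> nat) (minus : bool) : finType :=
  {x : ambient n r s | is_cell minus x}.

Definition below n m (r s : 'I_m -> nat) (x y : ambient n r s) : bool :=
  match x, y with
  (* diagonal cell j+1 lies in row j+1+r_i of page i: entries in that row
     are larger than the diagonal entry *)
  | inl j, inr (i, a, _) => (a : nat) == j.+1 + r i
  (* diagonal cell j+1 lies in column j+1 of every page: entries in that
     column are smaller than the diagonal entry *)
  | inr (_, _, b), inl j => (b : nat) == j.+1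
  | _, _ => false
  end.

Definition bookN n m (r s : 'I_m -> nat) (minus : bool) : nat :=
  (rsum r + rsum s + 1) * n + m * 'C(n, 2)
  + (if minus then 0 else \sum_(i < m) r i * s i).

Definition is_SB n m (r s : 'I_m -> nat) (minus : bool)
    (f : {ffun cell n r s minus -> 'I_(bookN n r s minus).+1}) : bool :=
  [&& [forall c, 0 < f c],
      injectiveb f,
      [forall k : 'I_(bookN n r s minus).+1,
          (0 < k) ==> [exists c, f c == k]] &
      [forall c, forall d, below (val c) (val d) ==> (f c < f d)]].

Definition SB n m (r s : 'I_m -> nat) (minus : bool) :=
  [set f : {ffun cell n r s minus -> 'I_(bookN n r s minus).+1}
     | is_SB f].

From mathcomp Require Import all_boot all_order all_algebra.
From mathcomp Require Import zify.
Import GRing.Theory Num.Theory.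
Set Implicit Arguments. Unset Strict Implicit. Unset Printing Implicit Defensive.

(* The cells of page i in rows
   1..r_i and columns n+1..n+s_i meet no diagonal cell in their row or column,
   so they are unrelated to every cell, and removing them leaves the ^- book.
   An unrelated cell may carry any label: recording its label and closing the
   gap in the remaining labels is a bijection between labellings of A by
   1..N+1 and pairs (label, labelling of A minus the cell by 1..N). Removing
   the k = sum_i r_i s_i free cells one by one gives |SB| = N^(k) |SB^-|,
   with N^(k) = N!/(N-k)! the falling factorial. *)

Lemma unbump_gt0 h i : 0 < h -> 0 < i -> 0 < unbump h i.
Proof. by rewrite /unbump; lia. Qed.

Lemma unbump_le h i N : h <= N.+1 -> i <= N.+1 -> i != h -> unbump h i <= N.
Proof. by rewrite /unbump; lia. Qed.

Lemma unbump_inj h i j : i != h -> j != h -> unbump h i = unbump h j -> i = j.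
Proof. by rewrite /unbump; lia. Qed.

Lemma ltn_unbump2 h i j : i != h -> j != h -> i < j -> unbump h i < unbump h j.
Proof. by rewrite /unbump; lia. Qed.

Lemma bump_gt0 h i : 0 < i -> 0 < bump h i.
Proof. by rewrite /bump; lia. Qed.

Lemma bump_le h i N : i <= N -> bump h i <= N.+1.
Proof. by rewrite /bump; lia. Qed.

Lemma ltn_bump2 h i j : i < j -> bump h i < bump h j.
Proof. by rewrite /bump; lia. Qed.

Section Labellings.
Variables (T : finType) (B : nat) (R : rel T).
Implicit Types (A : {set T}) (f g : {ffun T -> 'I_B.+1}) (v : 'I_B.+1).

(* Labellings of all subsets A of T share the type {ffun T -> 'I_B.+1}, with
   label 0 off A, so that A can shrink without changing types. *)
Definition labelling A N f : bool :=
  [&& #|A| == N,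
      [forall x in ~: A, f x == 0 :> nat],
      [forall x in A, 0 < f x <= N],
      [forall x in A, forall y in A, (f x == f y) ==> (x == y)] &
      [forall x in A, forall y in A, R x y ==> (f x < f y)]].

Definition labellings A N := [set f | labelling A N f].

Lemma labellingP A N f :
  reflect [/\ #|A| = N, {in ~: A, forall x, f x = 0 :> nat},
              {in A, forall x, 0 < f x <= N}, {in A &, injective f} &
              {in A &, forall x y, R x y -> f x < f y}]
          (labelling A N f).
Proof.
apply: (iffP and5P) => [[/eqP cA /forall_inP f0 /forall_inP fN inj mono]|].
  split=> // [x /f0/eqP //|x y xA yA fxy|x y xA yA].
    apply/eqP; move/forall_inP: inj => /(_ x xA)/forall_inP/(_ y yA)/implyP.
    by apply; rewrite fxy.
  by move/forall_inP: mono => /(_ x xA)/forall_inP/(_ y yA)/implyP.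
case=> cA f0 fN inj mono; split; first exact/eqP.
- by apply/forall_inP => x /f0 ->.
- exact/forall_inP.
- apply/forall_inP => x xA; apply/forall_inP => y yA; apply/implyP => /eqP fxy.
  by rewrite (inj x y xA yA fxy).
- by apply/forall_inP => x xA; apply/forall_inP => y yA; apply/implyP; apply: mono.
Qed.

Definition isolated (x : T) := forall y, ~~ R x y && ~~ R y x.

Section IsolatedElement.
Variables (x : T) (A : {set T}) (N : nat).
Hypotheses (xA : x \in A) (N_lt_B : N < B) (x_isolated : isolated x).

Definition labels : {set 'I_B.+1} := [set v : 'I_B.+1 | 0 < v <= N.+1].

Lemma card_labels : #|labels| = N.+1.
Proof.
have -> : labels = (fun k : 'I_N.+1 => inord k.+1) @: setT.
  apply/setP => v; rewrite inE; apply/idP/imsetP => [v_gt0_le|[k _ ->]].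
    exists (inord v.-1) => //; apply: val_inj => /=.
    by rewrite !inordK; lia.
  by rewrite inordK; have := ltn_ord k; lia.
rewrite card_imset ?cardsT ?card_ord // => k1 k2 /(congr1 val) /=.
have k1B : k1.+1 < B.+1 by have := ltn_ord k1; lia.
have k2B : k2.+1 < B.+1 by have := ltn_ord k2; lia.
by rewrite !inordK // => -[/val_inj].
Qed.

Definition drop_label f : {ffun T -> 'I_B.+1} :=
  [ffun y => inord (if y == x then 0 else unbump (f x) (f y))].

Definition insert_label v g : {ffun T -> 'I_B.+1} :=
  [ffun y => if y == x then v else inord (bump v (g y))].

Lemma drop_label_x f : drop_label f x = 0 :> nat.
Proof. by rewrite ffunE eqxx inordK. Qed.

Lemma drop_labelE f y : y != x -> drop_label f y = unbump (f x) (f y) :> nat.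
Proof.
move=> /negbTE yx; rewrite ffunE yx inordK //.
by apply: leq_ltn_trans (ltn_ord (f y)); rewrite /unbump leq_subr.
Qed.

Lemma insert_label_x v g : insert_label v g x = v.
Proof. by rewrite ffunE eqxx. Qed.

Lemma insert_labelE v g y :
  y != x -> g y < B -> insert_label v g y = bump v (g y) :> nat.
Proof.
move=> /negbTE yx gyB; rewrite ffunE yx inordK //.
by rewrite ltnS (leq_trans (bump_le v (leqnn _))).
Qed.

Lemma labelling_neq f :
  f \in labellings A N.+1 -> forall y, y != x -> f y != f x :> nat.
Proof.
rewrite inE => /labellingP [_ f0 fN inj _] y yx.
have /andP [fx_gt0 _] := fN x xA.
case: (boolP (y \in A)) => [yA|yA]; last by rewrite (f0 y) ?inE // neq_ltn fx_gt0.
by apply: contra yx => /eqP/val_inj fyx; apply/eqP/inj.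
Qed.

Lemma labelling_le f : f \in labellings A N.+1 -> forall y, f y <= N.+1.
Proof.
rewrite inE => /labellingP [_ f0 fN _ _] y.
by case: (boolP (y \in A)) => [/fN/andP[]|yA] //; rewrite (f0 y) // inE.
Qed.

Lemma labelling_lt f : f \in labellings (A :\ x) N -> forall y, f y < B.
Proof.
rewrite inE => /labellingP [_ f0 fN _ _] y; apply: leq_ltn_trans N_lt_B.
by case: (boolP (y \in A :\ x)) => [/fN/andP[]|yA] //; rewrite (f0 y) // inE.
Qed.

Lemma drop_label_labelling f :
  f \in labellings A N.+1 -> drop_label f \in labellings (A :\ x) N.
Proof.
move=> fL; have neq := labelling_neq fL; have le := labelling_le fL.
move: fL; rewrite !inE => /labellingP [cA f0 fN inj mono].
have /andP [fx_gt0 _] := fN x xA.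
apply/labellingP; split.
- by move: cA; rewrite (cardsD1 x) xA => -[].
- move=> y; rewrite !inE negb_and negbK; case: (eqVneq y x) => [-> _|yx /= yA].
    exact: drop_label_x.
  by rewrite drop_labelE // (f0 y) ?inE // /unbump ltn0.
- move=> y /setD1P [yx yA]; rewrite drop_labelE // unbump_gt0 ?unbump_le ?neq ?le //.
  by case/andP: (fN y yA).
- move=> y z /setD1P [yx yA] /setD1P [zx zA] /(congr1 val).
  rewrite /= !drop_labelE // => /(unbump_inj (neq y yx) (neq z zx)) /val_inj.
  exact: inj.
- move=> y z /setD1P [yx yA] /setD1P [zx zA] Ryz; rewrite !drop_labelE //.
  by apply: ltn_unbump2; rewrite ?neq ?mono.
Qed.

Lemma insert_label_labelling v g : v \in labels ->
  g \in labellings (A :\ x) N -> insert_label v g \in labellings A N.+1.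
Proof.
move=> vL gL; have gB := labelling_lt gL.
move: vL gL; rewrite !inE => /andP [v_gt0 vN] /labellingP [cA g0 gN inj mono].
apply/labellingP; split.
- by rewrite (cardsD1 x) xA cA.
- move=> y; rewrite inE => yA; have yx : y != x by apply: contraNneq yA => ->.
  by rewrite insert_labelE // (g0 y) ?inE ?(negbTE yA) ?andbF // /bump leqNgt v_gt0.
- move=> y yA; case: (eqVneq y x) => [->|yx]; first by rewrite insert_label_x v_gt0.
  have /gN /andP [gy_gt0 gyN] : y \in A :\ x by apply/setD1P.
  by rewrite insert_labelE // bump_gt0 ?bump_le.
- move=> y z yA zA /(congr1 val) /=.
  case: (eqVneq y x) => [->|yx]; case: (eqVneq z x) => [->|zx] //.
  + by rewrite insert_label_x insert_labelE // => /eqP; rewrite (negbTE (neq_bump _ _)).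
  + rewrite insert_label_x insert_labelE // => /esym/eqP.
    by rewrite (negbTE (neq_bump _ _)).
  + rewrite !insert_labelE // => /(can_inj (bumpK v)) /val_inj.
    by apply: inj; apply/setD1P.
- move=> y z yA zA Ryz.
  case: (eqVneq y x) => [yx|yx]; first by have := x_isolated z; rewrite -yx Ryz.
  case: (eqVneq z x) => [zx|zx]; first by have := x_isolated y; rewrite -zx Ryz andbF.
  rewrite !insert_labelE //; apply: ltn_bump2.
  by apply: mono => //; apply/setD1P.
Qed.

Lemma drop_labelK f :
  f \in labellings A N.+1 -> insert_label (f x) (drop_label f) = f.
Proof.
move=> fL; apply/ffunP => y; apply: val_inj => /=.
case: (eqVneq y x) => [->|yx]; first by rewrite insert_label_x.
rewrite insert_labelE ?drop_labelE ?unbumpK ?inE ?(labelling_neq fL) //.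
apply: leq_ltn_trans N_lt_B; rewrite unbump_le ?(labelling_le fL) //.
exact: labelling_neq.
Qed.

Lemma insert_labelK v g : g \in labellings (A :\ x) N ->
  drop_label (insert_label v g) = g.
Proof.
move=> gL; apply/ffunP => y; apply: val_inj => /=.
case: (eqVneq y x) => [->|yx].
  move: gL; rewrite drop_label_x inE => /labellingP [_ g0 _ _ _].
  by rewrite (g0 x) // !inE eqxx.
by rewrite drop_labelE // insert_label_x insert_labelE ?bumpK ?(labelling_lt gL).
Qed.

Lemma card_labellings_isolated :
  #|labellings A N.+1| = N.+1 * #|labellings (A :\ x) N|.
Proof.
rewrite -[in RHS]card_labels -cardsX.
rewrite -(card_in_imset (f := fun f => (f x, drop_label f))).
  apply: eq_card => -[v g]; rewrite inE /=; apply/imsetP/andP.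
    move=> [f fL [-> ->]]; split; last exact: drop_label_labelling.
    by move: fL; rewrite !inE => /labellingP [_ _ fN _ _]; apply: fN.
  move=> [vL gL]; exists (insert_label v g); first exact: insert_label_labelling.
  by rewrite insert_label_x insert_labelK.
move=> f1 f2 f1L f2L [e1 e2].
by rewrite -(drop_labelK f1L) -(drop_labelK f2L) e1 e2.
Qed.

End IsolatedElement.

Lemma labellings_eq0 A : A != set0 -> labellings A 0 = set0.
Proof.
move=> A_neq0; apply/setP => f; rewrite !inE; apply: contraNF A_neq0.
by case/labellingP => /eqP; rewrite cards_eq0.
Qed.

Lemma card_labellings_isolated_set (F A : {set T}) N :
  F \subset A -> N <= B -> {in F, forall x, isolated x} ->
  #|labellings A N| = N ^_ #|F| * #|labellings (A :\: F) (N - #|F|)|.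
Proof.
move Fk : #|F| => k; elim: k F Fk A N => [|k IH] F Fk A N FA NB Fiso.
  by move/eqP: Fk; rewrite cards_eq0 => /eqP ->; rewrite setD0 subn0 mul1n.
have /set0Pn [x xF] : F != set0 by rewrite -card_gt0 Fk.
have xA := subsetP FA x xF.
case: N NB => [_|N NB].
  by rewrite labellings_eq0 ?cards0 //; apply/set0Pn; exists x.
have Fxk : #|F :\ x| = k by move: Fk; rewrite (cardsD1 x) xF => -[].
have FAx : F :\ x \subset A :\ x by apply: setSD.
rewrite (card_labellings_isolated xA NB (Fiso x xF)) ffactSS -mulnA subSS.
rewrite (IH (F :\ x) Fxk (A :\ x) N FAx (ltnW NB)); last by move=> y /setD1P [_ /Fiso].
suff -> : A :\ x :\: (F :\ x) = A :\: F by [].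
apply/setP => y; rewrite !inE.
by case: (eqVneq y x) => [->|]; rewrite ?xF.
Qed.

Section SigLabellings.
Variables (P : pred T) (N : nat).
Hypothesis N_le_B : N <= B.
Local Notation sig_fun := {ffun {x | P x} -> 'I_N.+1}.

Definition sig_labelling (f : sig_fun) : bool :=
  [&& [forall c, 0 < f c], injectiveb f,
      [forall k : 'I_N.+1, (0 < k) ==> [exists c, f c == k]] &
      [forall c, forall d, R (val c) (val d) ==> (f c < f d)]].

Definition extend (f : sig_fun) : {ffun T -> 'I_B.+1} :=
  [ffun y => if insub y is Some c then widen_ord (N_le_B : N < B.+1) (f c)
             else ord0].

Lemma extend_val (f : sig_fun) c : extend f (val c) = f c :> nat.
Proof. by rewrite ffunE valK. Qed.

Lemma extend_out (f : sig_fun) y : ~~ P y -> extend f y = 0 :> nat.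
Proof. by move=> Py; rewrite ffunE insubN. Qed.

Lemma extend_inj : injective extend.
Proof.
by move=> f g e; apply/ffunP => c; apply: val_inj; rewrite /= -!extend_val e.
Qed.

Lemma mem_setP y : y \in [set x | P x] -> exists c : {x | P x}, y = val c.
Proof. by rewrite inE => Py; exists (exist _ y Py). Qed.

Lemma card_setP : #|[set x | P x]| = #|{: {x | P x}}|.
Proof. by rewrite card_sig cardsE. Qed.

Lemma card_ord_gt0 : #|[set k : 'I_N.+1 | 0 < k]| = N.
Proof.
suff -> : [set k : 'I_N.+1 | 0 < k] = [set~ ord0] by rewrite cardsC1 card_ord.
by apply/setP => -[[|k] ?]; rewrite !inE.
Qed.

Lemma image_sig_labelling (f : sig_fun) :
  sig_labelling f -> f @: setT = [set k : 'I_N.+1 | 0 < k].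
Proof.
case/and4P => /forallP f_gt0 _ /forallP f_onto _; apply/setP => k; rewrite inE.
apply/imsetP/idP => [[c _ ->] //|k_gt0].
by have /existsP [c /eqP <-] := implyP (f_onto k) k_gt0; exists c.
Qed.

Lemma extend_labelling (f : sig_fun) :
  sig_labelling f -> extend f \in labellings [set x | P x] N.
Proof.
move=> fL; have f_image := image_sig_labelling fL.
case/and4P: fL => /forallP f_gt0 /injectiveP f_inj _ /forallP f_mono.
rewrite inE; apply/labellingP; split.
- by rewrite card_setP -cardsT -(card_imset _ f_inj) f_image card_ord_gt0.
- by move=> y /[!inE] Py; rewrite extend_out.
- by move=> _ /mem_setP [c ->]; rewrite extend_val f_gt0 -ltnS ltn_ord.
- move=> _ _ /mem_setP [c ->] /mem_setP [d ->] /(congr1 val).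
  by rewrite /= !extend_val => /val_inj /f_inj ->.
- move=> _ _ /mem_setP [c ->] /mem_setP [d ->] Rcd; rewrite !extend_val.
  exact: (implyP (forallP (f_mono c) d)).
Qed.

Lemma labelling_extend g : g \in labellings [set x | P x] N ->
  exists2 f, sig_labelling f & extend f = g.
Proof.
rewrite inE => /labellingP [cP g0 gN g_inj g_mono].
have Pc (c : {x | P x}) : val c \in [set x | P x] by rewrite inE; apply: valP.
have gN_sig (c : {x | P x}) : 0 < g (val c) <= N := gN _ (Pc c).
pose f : sig_fun := [ffun c => inord (g (val c)) : 'I_N.+1].
have fE c : f c = g (val c) :> nat.
  by rewrite ffunE inordK // ltnS; case/andP: (gN_sig c).
have f_inj : injective f.
  move=> c d /(congr1 val); rewrite /= !fE => /val_inj.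
  by move/(g_inj _ _ (Pc c) (Pc d)) => /val_inj.
have f_image : f @: setT = [set k : 'I_N.+1 | 0 < k].
  apply/eqP; rewrite eqEcard card_ord_gt0 card_imset // cardsT -card_setP cP.
  rewrite leqnn andbT; apply/subsetP => _ /imsetP [c _ ->].
  by rewrite inE fE; case/andP: (gN_sig c).
exists f.
  apply/and4P; split.
  - by apply/forallP => c; rewrite fE; case/andP: (gN_sig c).
  - exact/injectiveP.
  - apply/forallP => k; apply/implyP => k_gt0.
    have /imsetP [c _ ->] : k \in f @: setT by rewrite f_image inE.
    by apply/existsP; exists c.
  - apply/forallP => c; apply/forallP => d; apply/implyP => Rcd.
    by rewrite !fE g_mono ?Pc.
apply/ffunP => y; apply: val_inj => /=.
case: (boolP (y \in [set x | P x])) => [/mem_setP [c ->]|].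
  by rewrite extend_val fE.
by rewrite inE => Py; rewrite extend_out // g0 // !inE.
Qed.

Lemma card_sig_labellings :
  #|[set f : sig_fun | sig_labelling f]| = #|labellings [set x | P x] N|.
Proof.
rewrite -(card_imset _ extend_inj); apply: eq_card => g.
apply/imsetP/idP => [[f fL ->]|/labelling_extend [f fL <-]].
  by apply: extend_labelling; rewrite inE in fL.
by exists f; rewrite ?inE.
Qed.

End SigLabellings.
End Labellings.

Lemma leq_rsum m (t : 'I_m -> nat) i : t i <= rsum t.
Proof. by rewrite /rsum (bigD1 i) //= leq_addr. Qed.

Section SelbergBook.
Variables (n m : nat) (r s : 'I_m -> nat).

Local Notation cells minus := [set x : ambient n r s | is_cell minus x].

Definition free_cells : {set ambient n r s} := cells false :\: cells true.

Lemma cells_minus_sub : cells true \subset cells false.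
Proof.
apply/subsetP => -[j|[[i a] b]]; rewrite !inE //=.
by case/and4P => -> -> -> /and4P [-> -> -> _].
Qed.

Lemma mem_free_cells i a b :
  (inr (i, a, b) \in free_cells) = [&& 0 < a, a <= r i, n < b & b <= n + s i].
Proof.
rewrite !inE /=; have := leq_rsum r i; have := leq_rsum s i.
by move=> *; apply/idP/idP; lia.
Qed.

Lemma free_cell_isolated : {in free_cells, forall x, isolated (@below n m r s) x}.
Proof.
move=> [j|[[i a] b]]; first by rewrite !inE.
rewrite mem_free_cells => /and4P [a_gt0 a_le b_gt b_le] [j'|[[i' a'] b']] //=.
by have := ltn_ord j'; lia.
Qed.

Lemma cells_setD_free : cells false :\: free_cells = cells true.
Proof. by rewrite setDDr setDv set0U; apply/setIidPr/cells_minus_sub. Qed.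

Definition free_cell (p : {i : 'I_m & ('I_(r i) * 'I_(s i))%type}) :
  ambient n r s :=
  inr (tag p, inord (tagged p).1.+1, inord (n + (tagged p).2.+1)).

Lemma free_cell_inj : injective free_cell.
Proof.
move=> [i [a b]] [i' [a' b']] [ii'] + +; subst i'.
have := leq_rsum r i; have := leq_rsum s i.
have := ltn_ord a; have := ltn_ord b; have := ltn_ord a'; have := ltn_ord b'.
move=> ? ? ? ? ? ? /(congr1 (@nat_of_ord _)) + /(congr1 (@nat_of_ord _)).
rewrite !inordK; try lia.
by move=> ? ?; congr existT; congr pair; apply: ord_inj; lia.
Qed.

Lemma free_cellsE : free_cells = free_cell @: setT.
Proof.
apply/setP => -[j|[[i a] b]].
  by rewrite !inE; apply/esym/imsetP => -[].
rewrite mem_free_cells; apply/idP/imsetP => [|[[i' [a' b']] _ [-> -> ->]]].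
  case/and4P => a_gt0 a_le b_gt b_le.
  have a_lt : a.-1 < r i by lia.
  have b_lt : b - n.+1 < s i by lia.
  exists (existT _ i (Ordinal a_lt, Ordinal b_lt)) => //.
  have := leq_rsum r i; have := leq_rsum s i => *.
  by congr (inr (_, _, _)); apply: val_inj; rewrite /= inordK; lia.
have := leq_rsum r i'; have := leq_rsum s i'; have := ltn_ord a'; have := ltn_ord b'.
by move=> *; rewrite /= !inordK; lia.
Qed.

Lemma card_free_cells : #|free_cells| = \sum_(i < m) r i * s i.
Proof.
rewrite free_cellsE card_imset; last exact: free_cell_inj.
rewrite cardsT card_tagged sumnE big_map big_enum /=.
by apply: eq_bigr => i _; rewrite card_prod !card_ord.
Qed.

Lemma card_SB :
  #|SB n r s false|
  = bookN n r s false ^_ (\sum_(i < m) r i * s i) * #|SB n r s true|.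
Proof.
have N_le : bookN n r s true <= bookN n r s false by rewrite /bookN addn0 leq_addr.
have -> : #|SB n r s false| = #|labellings (bookN n r s false) (@below n m r s)
                                  (cells false) (bookN n r s false)|
  := card_sig_labellings _ _ (leqnn _).
have -> : #|SB n r s true| = #|labellings (bookN n r s false) (@below n m r s)
                                 (cells true) (bookN n r s true)|
  := card_sig_labellings _ _ N_le.
rewrite (card_labellings_isolated_set (F := free_cells)) ?subsetDl ?cells_setD_free //.
  by rewrite card_free_cells [in _ - _]/bookN addnK /bookN addn0.
exact: free_cell_isolated.
Qed.

End SelbergBook.

Local Open Scope ring_scope.

Theorem proposition4p4 (n m : nat) (r s : 'I_m -> nat) :
  (0 < n)%N -> (0 < m)%N ->
  (#|SB n r s false|%:R : rat) =
    #|SB n r s true|%:R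
    * ((rsum r + rsum s + 1) * n + m * 'C(n, 2) + \sum_(i < m) r i * s i)`!%:R
    / ((rsum r + rsum s + 1) * n + m * 'C(n, 2))`!%:R.
Proof.
move=> _ _; set N0 := ((rsum r + rsum s + 1) * n + m * 'C(n, 2))%N.
set k := (\sum_(i < m) r i * s i)%N.
have fact_N0_neq0 : N0`!%:R != 0 :> rat by rewrite pnatr_eq0 -lt0n fact_gt0.
rewrite card_SB -(@ffact_fact (N0 + k) k) ?leq_addl // addnK.
by rewrite /bookN /= -/N0 -/k !natrM mulrA mulfK // mulrC.
Qed.
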